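(* Let $P$ be a set of $n$ points in general position in the plane such that the number $m$ of points of $P$ on the boundary of the convex hull of $P$ satisfies $m\geq 10$. Then $\mu(D(P))\geq\binom{n}{2}-5$.
   Context: General position means no three points collinear. $D(P)$ is the graph whose vertices are all closed segments with both endpoints in $P$, two adjacent iff disjoint. For a graph $G$ and $U\subseteq V(G)$, two distinct vertices $x,y\in U$ are $U$-mutually visible if $G$ contains a shortest $x$-$y$ path none of whose internal vertices lies in $U$; $U$ is a mutual-visibility set if every two distinct vertices of $U$ are $U$-mutually visible. $\mu(G)$ is the maximum size of a mutual-visibility set of $G$. *)

From HB Require Import structures.
From mathcomp Require Import all_boot all_order all_algebra.
From mathcomp Require Import boolp reals.
Set Implicit Arguments. Unset Strict Implicit. Unset Printing Implicit Defensive.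
Import Order.TTheory GRing.Theory Num.Theory.
Local Open Scope ring_scope.

Section Graphs.
Variables (V : finType) (e : rel V).

(* p is a walk from x to y: x :: p follows edges and ends at y; its length is size p *)
Definition walk (x y : V) (p : seq V) : Prop := path e x p /\ last x p = y.

Definition shortest_path (x y : V) (p : seq V) : Prop :=
  walk x y p /\ forall q, walk x y q -> (size p <= size q)%N.

Definition internal (p : seq V) : seq V := take (size p).-1 p.

Definition mutually_visible (U : {set V}) (x y : V) : Prop :=
  exists p, shortest_path x y p /\ forall v, v \in internal p -> v \notin U.

Definition mutual_visibility_set (U : {set V}) : Prop :=
  forall x y, x \in U -> y \in U -> x != y -> mutually_visible U x y.

Definition mu : nat := \max_(U : {set V} | `[< mutual_visibility_set U >]) #|U|.
End Graphs.

Section Geometry.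
Variable R : realType.
Notation pt := (R * R)%type.

Definition collinear (a b c : pt) : Prop :=
  (b.1 - a.1) * (c.2 - a.2) - (b.2 - a.2) * (c.1 - a.1) = 0.

Definition closed_segment (a b : pt) : pt -> Prop :=
  fun z => exists t : R, 0 <= t <= 1 /\
    z = ((1 - t) * a.1 + t * b.1, (1 - t) * a.2 + t * b.2).

Variable n : nat.
Variable p : 'I_n -> pt.

Definition general_position : Prop :=
  forall i j k : 'I_n, i != j -> j != k -> i != k -> ~ collinear (p i) (p j) (p k).

Definition conv_hull : pt -> Prop :=
  fun z => exists w : 'I_n -> R, (forall i, 0 <= w i) /\ \sum_i w i = 1 /\
    z = (\sum_i w i * (p i).1, \sum_i w i * (p i).2).

Definition on_boundary (A : pt -> Prop) (z : pt) : Prop :=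
  forall eps : R, 0 < eps ->
    (exists x, A x /\ (x.1 - z.1) ^+ 2 + (x.2 - z.2) ^+ 2 < eps ^+ 2) /\
    (exists x, ~ A x /\ (x.1 - z.1) ^+ 2 + (x.2 - z.2) ^+ 2 < eps ^+ 2).

Definition num_hull_boundary : nat :=
  #|[set i : 'I_n | `[< on_boundary conv_hull (p i) >]]|.

(* vertices of D(P): the segments with both endpoints in P, i.e. 2-subsets *)
Definition seg_vertex := {S : {set 'I_n} | #|S| == 2%N}.

Definition seg_points (S : seg_vertex) : pt -> Prop :=
  fun z => exists i j, val S = [set i; j] /\ closed_segment (p i) (p j) z.

Definition D_adj : rel seg_vertex :=
  fun S T => `[< ~ exists z, seg_points S z /\ seg_points T z >].
End Geometry.

From HB Require Import structures.
From mathcomp Require Import all_boot all_order all_algebra.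
From mathcomp Require Import boolp reals.
From mathcomp Require Import ring lra zify.
Import Order.TTheory GRing.Theory Num.Theory.
Set Implicit Arguments. Unset Strict Implicit. Unset Printing Implicit Defensive.

(* Gift wrapping lists the hull vertices c_0, ..., c_(k-1) cyclically, each c_t c_(t+1)
   being a hull edge: all other points lie strictly to its left.  A point of P off
   this cycle lies strictly inside a triangle c_0 c_t c_(t+1), hence not on the
   boundary, so k >= 10 and the edges c_0c_1, c_2c_3, ..., c_8c_9 are pairwise
   disjoint.  A hull edge is disjoint from every segment avoiding its endpoints,
   since that segment lies strictly on one side of its line.  Hence, after
   removing these five edges from D(P), any two remaining segments use at most
   four points, one of the five edges avoids them all, and it is a common
   neighbour outside the set: the remaining C(n,2) - 5 segments are mutually
   visible. *)

Section MutualVisibility.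
Variables (V : finType) (e : rel V).

Lemma card_le_mu (U : {set V}) : mutual_visibility_set e U -> #|U| <= mu e.
Proof. by move=> U_mv; apply: (leq_bigmax_cond U); apply/asboolP. Qed.

Lemma common_neighbour_mutual_visibility (U : {set V}) :
  (forall x y, x \in U -> y \in U -> x != y -> ~~ e x y ->
     exists2 w, w \notin U & e x w && e w y) ->
  mutual_visibility_set e U.
Proof.
move=> nbr x y xU yU xy; have [exy | nexy] := boolP (e x y).
  exists [:: y]; split=> //; split=> [|q [_]]; first by split=> //=; rewrite exy.
  by case: q => [/= yx|//]; rewrite yx eqxx in xy.
have [w wU /andP [xw wy]] := nbr x y xU yU xy nexy.
exists [:: w; y]; split.
  split=> [|[|z [|z' q]] [] //=]; first by split=> //=; rewrite xw wy.
  - by move=> _ yx; rewrite yx eqxx in xy.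
  - by move=> /andP [xz _] zy; rewrite -zy xz in nexy.
by move=> v; rewrite /internal /= inE => /eqP ->.
Qed.

End MutualVisibility.

Lemma disjoint_family_avoid (T I : finType) (w : I -> {set T}) (Z : {set T}) :
  (forall i j, i != j -> [disjoint w i & w j]) -> #|Z| < #|I| ->
  [exists i, [disjoint w i & Z]].
Proof.
move=> w_disj; apply: contraLR; rewrite -leqNgt => /existsPn meet.
have /fin_all_exists [g gP] i : exists z, z \in w i :&: Z.
  by apply/set0Pn; rewrite setI_eq0 meet.
have g_inj : injective g.
  move=> i j gij; apply/eqP; apply: contraT => ij.
  have := gP i; have := gP j; rewrite !inE -gij => /andP [gwj _] /andP [gwi _].
  by rewrite (disjointFr (w_disj i j ij) gwi) in gwj.
have /card_uniqP : uniq (map g (enum I)) by rewrite map_inj_uniq ?enum_uniq.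
rewrite size_map -cardE => <-; apply/subset_leq_card/subsetP => _ /mapP [i _ ->].
by have := gP i; rewrite inE => /andP [].
Qed.

Lemma cards2_eq2 (T : finType) (i j : T) : i != j -> #|[set i; j]| == 2.
Proof. by rewrite cards2 => ->. Qed.

Lemma discrete_ivt (P : pred nat) m : 0 < m -> P 1 -> ~~ P m ->
  exists t, [/\ 0 < t, t < m, P t & ~~ P t.+1].
Proof.
elim: m => [//|m IH] _ P1 Pm.
case: m IH Pm => [|m] IH Pm; first by rewrite P1 in Pm.
have [Pm1|nPm1] := boolP (P m.+1); first by exists m.+1.
have [t [t_gt0 tm Pt nPt1]] := IH isT P1 nPm1.
by exists t; split=> //; apply: ltnW.
Qed.

Lemma iter_order_rho (T : finType) (f : T -> T) x y :
  y = iter (order f x) f x -> iter (order f y) f y = y.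
Proof.
move=> def_y; have /trajectP [i lt_i def_y'] := looping_order f x.
rewrite -def_y in def_y'.
have /= -> // := all_iffLR (@orbitPcycle _ f y) 3 4.
exists (order f x - i).-1; rewrite -iterS prednK; last by rewrite subn_gt0.
by rewrite {1}def_y' -iterD subnK; [exact/esym | exact: ltnW].
Qed.

Local Open Scope ring_scope.

Section Orientation.
Variable R : realFieldType.
Implicit Types a b c x y z : R * R.

(* [collinear a b c] unfolds to [orient a b c = 0]. *)
Definition orient a b c : R :=
  (b.1 - a.1) * (c.2 - a.2) - (b.2 - a.2) * (c.1 - a.1).

Definition l1_dist a b : R := `|b.1 - a.1| + `|b.2 - a.2|.

Lemma orient_swap12 a b c : orient b a c = - orient a b c.
Proof. by rewrite /orient; ring. Qed.

Lemma orient_swap23 a b c : orient a c b = - orient a b c.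
Proof. by rewrite /orient; ring. Qed.

Lemma orient_aba a b : orient a b a = 0.
Proof. by rewrite /orient; ring. Qed.

Lemma orient_abb a b : orient a b b = 0.
Proof. by rewrite /orient; ring. Qed.

Lemma orient_comb a b x y t :
  orient a b ((1 - t) * x.1 + t * y.1, (1 - t) * x.2 + t * y.2)
  = (1 - t) * orient a b x + t * orient a b y.
Proof. by rewrite /orient /=; ring. Qed.

Lemma l1_dist_ge0 a b : 0 <= l1_dist a b.
Proof. by rewrite addr_ge0. Qed.

Lemma orient_near a b x z eps : 0 < eps ->
  (x.1 - z.1) ^+ 2 + (x.2 - z.2) ^+ 2 < eps ^+ 2 ->
  orient a b z - l1_dist a b * eps <= orient a b x.
Proof.
move=> eps_gt0 near.
have sq1 := sqr_ge0 (x.1 - z.1); have sq2 := sqr_ge0 (x.2 - z.2).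
have dx : - eps <= x.1 - z.1 <= eps by apply/andP; split; nra.
have dy : - eps <= x.2 - z.2 <= eps by apply/andP; split; nra.
have bound u d : - eps <= d <= eps -> - (`|u| * eps) <= u * d.
  by case/andP=> ? ?; have [u0|u0] := ger0P u; nra.
have := bound (b.1 - a.1) _ dy; have := bound (- (b.2 - a.2)) _ dx.
rewrite normrN /l1_dist /orient; lra.
Qed.

Lemma orient_trans_halfplane b y c x (N1 N2 : R) :
  (N1 != 0) || (N2 != 0) ->
  0 <= N1 * (y.1 - b.1) + N2 * (y.2 - b.2) ->
  0 <= N1 * (c.1 - b.1) + N2 * (c.2 - b.2) ->
  0 <= N1 * (x.1 - b.1) + N2 * (x.2 - b.2) ->
  0 < orient b y c -> 0 < orient b c x -> orient b y x != 0 ->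
  0 < orient b y x.
Proof.
move=> N_neq0 y_in c_in x_in byc bcx byx_neq0.
set Ny := N1 * (y.1 - b.1) + N2 * (y.2 - b.2) in y_in *.
set Nc := N1 * (c.1 - b.1) + N2 * (c.2 - b.2) in c_in *.
set Nx := N1 * (x.1 - b.1) + N2 * (x.2 - b.2) in x_in *.
have cramer : orient b y c * Nx + orient b c x * Ny = orient b y x * Nc.
  by rewrite /Ny /Nc /Nx /orient; ring.
have cramer1 : N1 * orient b y c = (c.2 - b.2) * Ny - (y.2 - b.2) * Nc.
  by rewrite /Ny /Nc /orient; ring.
have cramer2 : N2 * orient b y c = (y.1 - b.1) * Nc - (c.1 - b.1) * Ny.
  by rewrite /Ny /Nc /orient; ring.
(* if [b y x] were clockwise, [cramer] would put [y] and [c] on the boundary line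
   of the half-plane, making [b y c] degenerate *)
rewrite lt_neqAle eq_sym byx_neq0 /= leNgt; apply/negP => byx_lt0.
have Ny0 : Ny = 0 by nra.
have Nc0 : Nc = 0 by nra.
rewrite Ny0 Nc0 !mulr0 subr0 in cramer1 cramer2.
by case/orP: N_neq0 => /negPf N0; [move/eqP: cramer1 | move/eqP: cramer2];
  rewrite mulf_eq0 N0 /= => /eqP; lra.
Qed.

End Orientation.

Section ConvexHull.
Variables (R : realType) (n : nat) (p : 'I_n -> (R * R)%type).

Lemma conv_hull_comb3 i j k (a b c : R) :
  0 <= a -> 0 <= b -> 0 <= c -> a + b + c = 1 ->
  conv_hull p (a * (p i).1 + b * (p j).1 + c * (p k).1,
               a * (p i).2 + b * (p j).2 + c * (p k).2).
Proof.
move=> a_ge0 b_ge0 c_ge0 abc1.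
pose w x : R := a * (x == i)%:R + b * (x == j)%:R + c * (x == k)%:R.
have sum_w F : \sum_x w x * F x = a * F i + b * F j + c * F k.
  have pick l (G : 'I_n -> R) : \sum_x (x == l)%:R * G x = G l.
    by rewrite (bigD1 l) //= eqxx mul1r big1 ?addr0 // => x /negPf ->; rewrite mul0r.
  rewrite -(pick i (fun x => a * F x)) -(pick j (fun x => b * F x)).
  rewrite -(pick k (fun x => c * F x)) -!big_split /=.
  by apply: eq_bigr => x _; rewrite /w; ring.
exists w; split; [|split].
- by move=> x; rewrite /w !addr_ge0 // mulr_ge0.
- by have := sum_w (fun=> 1); rewrite /= !mulr1 abc1 => <-; apply: eq_bigr => x _; rewrite mulr1.
- by rewrite !sum_w.
Qed.

Lemma conv_hull_triangle i j k x :
  0 < orient (p i) (p j) (p k) ->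
  0 <= orient (p j) (p k) x -> 0 <= orient (p k) (p i) x ->
  0 <= orient (p i) (p j) x -> conv_hull p x.
Proof.
set D := orient (p i) (p j) (p k); set a := orient (p j) (p k) x.
set b := orient (p k) (p i) x; set c := orient (p i) (p j) x.
move=> D_gt0 a_ge0 b_ge0 c_ge0.
have D_sum : a + b + c = D by rewrite /a /b /c /D /orient; ring.
have D_neq0 : D != 0 by rewrite gt_eqF.
have abc1 : a / D + b / D + c / D = 1 by rewrite -!mulrDl D_sum mulfV.
have D_ge0 := ltW D_gt0.
have := conv_hull_comb3 i j k (divr_ge0 a_ge0 D_ge0) (divr_ge0 b_ge0 D_ge0)
  (divr_ge0 c_ge0 D_ge0) abc1.
(* barycentric coordinates: [D x = a p_i + b p_j + c p_k] (Cramer's rule) *)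
congr (conv_hull p _); rewrite -D_sum in D_neq0 *.
move: D_neq0; rewrite /a /b /c /orient => D_neq0.
by rewrite [RHS]surjective_pairing /=; congr pair; field.
Qed.

Lemma inside_not_boundary i j k z :
  0 < orient (p i) (p j) z -> 0 < orient (p j) (p k) z ->
  0 < orient (p k) (p i) z -> ~ on_boundary (conv_hull p) z.
Proof.
move=> ij_gt0 jk_gt0 ki_gt0 z_bd.
pose m := Num.min (orient (p i) (p j) z)
            (Num.min (orient (p j) (p k) z) (orient (p k) (p i) z)).
pose L := 1 + l1_dist (p i) (p j) + l1_dist (p j) (p k) + l1_dist (p k) (p i).
have := l1_dist_ge0 (p i) (p j); have := l1_dist_ge0 (p j) (p k).
have := l1_dist_ge0 (p k) (p i) => L_ki L_jk L_ij.
have L_gt0 : 0 < L by rewrite /L; lra.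
have m_gt0 : 0 < m by rewrite !lt_min ij_gt0 jk_gt0 ki_gt0.
pose eps := m / L; have eps_gt0 : 0 < eps by rewrite divr_gt0.
have L_eps : L * eps = m by rewrite /eps mulrCA mulfV ?gt_eqF ?mulr1.
(* by [orient_near], moving less than [eps = m / L] lowers each orientation by at most [m] *)
have [_ [x [x_out near]]] := z_bd eps eps_gt0.
have near_ge0 a b : l1_dist a b <= L -> m <= orient a b z -> 0 <= orient a b x.
  move=> l1_le m_le; have := orient_near a b eps_gt0 near.
  have := ler_wpM2r (ltW eps_gt0) l1_le; lra.
apply: x_out; apply: (conv_hull_triangle (i := i) (j := j) (k := k)).
- have -> : orient (p i) (p j) (p k)
      = orient (p i) (p j) z + orient (p j) (p k) z + orient (p k) (p i) z.
    by rewrite /orient; ring.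
  lra.
all: apply: near_ge0; rewrite /m ?ge_min ?lexx ?orbT //; rewrite /L; lra.
Qed.

End ConvexHull.

Section GiftWrapping.
Variables (R : realType) (n : nat) (p : 'I_n -> (R * R)%type).
Hypotheses (p_inj : injective p) (p_gp : general_position p).

Definition hull_edge (b c : 'I_n) : bool :=
  (b != c) && [forall x, (x != b) && (x != c) ==> (0 < orient (p b) (p c) (p x))].

Definition supported (b : 'I_n) : Prop :=
  exists N1 N2 : R, ((N1 != 0) || (N2 != 0)) /\
    forall x, 0 <= N1 * ((p x).1 - (p b).1) + N2 * ((p x).2 - (p b).2).

Lemma orient_neq0 i j k : i != j -> j != k -> i != k -> orient (p i) (p j) (p k) != 0.
Proof. by move=> ij jk ik; apply/eqP; apply: p_gp. Qed.

Lemma hull_edge_neq b c : hull_edge b c -> b != c.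
Proof. by case/andP. Qed.

Lemma hull_edge_left b c x :
  hull_edge b c -> x != b -> x != c -> 0 < orient (p b) (p c) (p x).
Proof. by case/andP=> _ /forallP /(_ x) /implyP bcx xb xc; apply: bcx; rewrite xb xc. Qed.

Lemma hull_edge_exists b c0 : c0 != b -> supported b -> exists c, hull_edge b c.
Proof.
move=> c0b [N1 [N2 [N_neq0 halfplane]]].
pose left c := [set x | 0 < orient (p b) (p c) (p x)].
have [c cb c_max] := @arg_maxnP _ c0 (fun c => c != b) (fun c => #|left c|) c0b.
exists c; rewrite /hull_edge eq_sym cb /=.
apply/forallP => x; apply/implyP => /andP [xb xc]; rewrite ltNge; apply/negP => bcx_le0.
have bxc_gt0 : 0 < orient (p b) (p x) (p c).
  rewrite orient_swap23 oppr_gt0 lt_neqAle bcx_le0 andbT.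
  by apply: orient_neq0; rewrite // eq_sym.
(* [c] maximises the number of points on its left, which [x] would exceed *)
have : left c \proper left x.
  apply/properP; split; last by exists c; rewrite !inE ?orient_abb ?ltxx.
  apply/subsetP => y; rewrite !inE => bcy_gt0.
  have yb : y != b by apply: contraTneq bcy_gt0 => ->; rewrite orient_aba ltxx.
  have yx : y != x by apply: contraTneq bcy_gt0 => ->; rewrite -leNgt.
  apply: (orient_trans_halfplane N_neq0 (halfplane x) (halfplane c) (halfplane y)) => //.
  by apply: orient_neq0; rewrite // eq_sym.
by move/proper_card; rewrite ltnNge => /negP; apply; apply: c_max.
Qed.

Lemma hull_edge_supported b c : hull_edge b c -> supported c.
Proof.
move=> bc; exists (- ((p c).2 - (p b).2)), ((p c).1 - (p b).1); split.
  apply: contraTT (hull_edge_neq bc); rewrite negb_or !negbK oppr_eq0 !subr_eq0.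
  case/andP=> /eqP e2 /eqP e1; apply/eqP/p_inj.
  by rewrite [p b]surjective_pairing [p c]surjective_pairing e1 e2.
move=> x; have -> : - ((p c).2 - (p b).2) * ((p x).1 - (p c).1)
    + ((p c).1 - (p b).1) * ((p x).2 - (p c).2) = orient (p b) (p c) (p x).
  by rewrite /orient; ring.
have [->|xb] := eqVneq x b; first by rewrite orient_aba.
have [->|xc] := eqVneq x c; first by rewrite orient_abb.
exact/ltW/hull_edge_left.
Qed.

Lemma leftmost_supported (a : 'I_n) : exists b, supported b.
Proof.
have [b _ b_min] := @arg_minP _ R _ a xpredT (fun i => (p i).1) isT.
exists b, 1, 0; split; first by rewrite oner_eq0.
by move=> x; rewrite mul0r addr0 mul1r subr_ge0; apply: b_min.
Qed.

Definition hull_succ (b : 'I_n) : 'I_n := odflt b [pick c | hull_edge b c].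

Lemma hull_succ_edge b : (1 < n)%N -> supported b -> hull_edge b (hull_succ b).
Proof.
move=> n_gt1 b_sup; have /set0Pn [c0] : [set~ b] != set0.
  by rewrite -card_gt0 cardsC1 card_ord -ltnS prednK // ltnW.
rewrite !inE => c0b; rewrite /hull_succ; case: pickP => [//|no_edge].
by have [c] := hull_edge_exists c0b b_sup; rewrite no_edge.
Qed.

Definition hull_cycle k (c : nat -> 'I_n) : Prop :=
  [/\ (1 < k)%N, forall t, hull_edge (c t) (c t.+1), c k = c 0 & {in gtn k &, injective c}].

Lemma hull_cycle_exists : (1 < n)%N -> exists k c, hull_cycle k c.
Proof.
move=> n_gt1; have [a0 a0_sup] := leftmost_supported (Ordinal (ltnW n_gt1)).
have iter_sup t : supported (iter t hull_succ a0).
  by elim: t => //= t IH; apply: hull_edge_supported (hull_succ_edge n_gt1 IH).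
(* the orbit of [a0] is rho-shaped; [y] lies on its cycle *)
pose y := iter (order hull_succ a0) hull_succ a0.
pose c t := iter t hull_succ y.
have edge t : hull_edge (c t) (c t.+1).
  by apply: hull_succ_edge n_gt1 _; rewrite /c /y -iterD.
have ck : c (order hull_succ y) = c 0 by apply: iter_order_rho.
have c_inj : {in gtn (order hull_succ y) &, injective c}.
  by move=> t1 t2 lt1 lt2 /(congr1 (findex hull_succ y)); rewrite !findex_iter.
exists (order hull_succ y), c; split=> //.
rewrite ltn_neqAle order_gt0 andbT; apply: contraTneq (hull_edge_neq (edge 0)) => k1.
by rewrite negbK k1 ck.
Qed.

Lemma hull_cycle_boundary k c b : hull_cycle k c ->
  on_boundary (conv_hull p) (p b) -> exists2 t, (t < k)%N & b = c t.
Proof.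
case=> k_gt1 edge ck c_inj b_bd; have [//|b_off] := pselect (exists2 t, (t < k)%N & b = c t).
have b_neq t : (t < k)%N -> b != c t by move=> tk; apply/eqP => bt; apply: b_off; exists t.
have k_gt0 : (0 < k)%N by apply: ltnW.
(* [p b] lies in one of the triangles [c 0, c t, c t.+1] fanning out from [c 0] *)
pose left t := 0 < orient (p (c 0)) (p (c t)) (p b).
have left1 : left 1%N by apply: hull_edge_left (edge 0%N) (b_neq _ _) (b_neq _ _).
have last_lt : (k.-1 < k)%N by rewrite ltn_predL.
have not_left_last : ~~ left k.-1.
  have := hull_edge_left (edge k.-1) (b_neq _ last_lt).
  rewrite prednK // ck => /(_ (b_neq 0%N k_gt0)).
  by rewrite orient_swap12 oppr_gt0 => lt0; rewrite /left -leNgt ltW.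
have [t [t_gt0 t_lt left_t not_left_t1]] :
    exists t, [/\ (0 < t)%N, (t < k.-1)%N, left t & ~~ left t.+1].
  by apply: discrete_ivt; rewrite // -ltnS prednK.
have t1_lt : (t.+1 < k)%N by rewrite -(prednK k_gt0) ltnS.
have neq0 : orient (p (c 0%N)) (p (c t.+1)) (p b) != 0.
  have c0_t1 : c 0%N != c t.+1 by apply/eqP => /c_inj; rewrite !inE => /(_ k_gt0 t1_lt).
  by apply: orient_neq0 => //; rewrite eq_sym; apply: b_neq.
exfalso; apply: (inside_not_boundary (i := c 0%N) (j := c t) (k := c t.+1) _ _ _ b_bd) => //.
  exact: hull_edge_left (edge t) (b_neq _ (ltn_trans (ltnSn t) t1_lt)) (b_neq _ t1_lt).
by rewrite orient_swap12 oppr_gt0 lt_neqAle neq0 leNgt.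
Qed.

Lemma num_hull_boundary_le k c : hull_cycle k c -> (num_hull_boundary p <= k)%N.
Proof.
move=> cyc; have on_cycle : [set b | `[< on_boundary (conv_hull p) (p b) >]]
    \subset [set c (val t) | t : 'I_k].
  apply/subsetP => b; rewrite inE => /asboolP /(hull_cycle_boundary cyc) [t tk ->].
  by apply/imsetP; exists (Ordinal tk).
apply: leq_trans (subset_leq_card on_cycle) _.
by apply: leq_trans (leq_imset_card _ _) _; rewrite card_ord.
Qed.

End GiftWrapping.

Section Segments.
Variables (R : realType) (n : nat) (p : 'I_n -> (R * R)%type).

Lemma card_seg_vertex : #|{: seg_vertex n}| = 'C(n, 2).
Proof. by rewrite card_sig -[in RHS](card_ord n) -card_draws cardsE. Qed.

Definition segment_of (i j : 'I_n) (ij : i != j) : seg_vertex n :=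
  exist _ [set i; j] (cards2_eq2 ij).

Lemma D_adj_sym (S T : seg_vertex n) : D_adj p S T = D_adj p T S.
Proof. by apply/asboolP/asboolP => no_common [z [Sz Tz]]; apply: no_common; exists z. Qed.

Lemma seg_points_orient a b (S : seg_vertex n) z : seg_points p S z ->
  exists i j t, [/\ i \in val S, j \in val S, 0 <= t <= 1 &
    orient a b z = (1 - t) * orient a b (p i) + t * orient a b (p j)].
Proof.
case=> i [j [defS [t [t01 ->]]]]; exists i, j, t.
by rewrite defS !inE !eqxx orbT orient_comb.
Qed.

Lemma hull_edge_D_adj a b (S T : seg_vertex n) : hull_edge p a b ->
  val T = [set a; b] -> [disjoint val S & val T] -> D_adj p S T.
Proof.
move=> ab defT ST; apply/asboolP => -[z [Sz Tz]].
have [i [j [t [iS jS /andP [t_ge0 t_le1] zS]]]] := seg_points_orient (p a) (p b) Sz.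
have [i' [j' [t' [i'T j'T _ zT]]]] := seg_points_orient (p a) (p b) Tz.
have on_line x : x \in val T -> orient (p a) (p b) (p x) = 0.
  by rewrite defT !inE => /orP [] /eqP ->; rewrite ?orient_aba ?orient_abb.
have left x : x \in val S -> 0 < orient (p a) (p b) (p x).
  move=> xS; have := disjointFr ST xS; rewrite defT !inE => /norP [xa xb].
  exact: hull_edge_left.
move: zT; rewrite zS (on_line i' i'T) (on_line j' j'T) !mulr0 addr0.
have := left i iS; have := left j jS; nra.
Qed.

Lemma hull_cycle_disjoint_edges k c : hull_cycle p k c -> (10 <= k)%N ->
  exists w : 'I_5 -> seg_vertex n,
    (forall r, exists a b, hull_edge p a b /\ val (w r) = [set a; b]) /\
    (forall r r', r != r' -> [disjoint val (w r) & val (w r')]).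
Proof.
case=> _ edge _ c_inj k_ge10.
exists (fun r => segment_of (hull_edge_neq (edge (2 * r)%N))); split=> [r|r r' rr'].
  by exists (c (2 * r)%N), (c (2 * r).+1).
have c_idx t t' : (t < 10)%N -> (t' < 10)%N -> c t = c t' -> t = t'.
  by move=> t10 t'10 /c_inj; apply; rewrite inE /=; lia.
have /negP rr'_nat : (r : nat) != r' by [].
have := ltn_ord r; have := ltn_ord r' => r'5 r5.
apply/pred0P => z /=; rewrite !inE.
by apply/negP => /andP [/orP [] /eqP -> /orP [] /eqP /c_idx idx];
  have := idx ltac:(lia) ltac:(lia); lia.
Qed.

Lemma hull_edges_complement_mutual_visibility (I : finType) (w : I -> seg_vertex n) :
  (forall r, exists a b, hull_edge p a b /\ val (w r) = [set a; b]) ->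
  (forall r r', r != r' -> [disjoint val (w r) & val (w r')]) -> (4 < #|I|)%N ->
  mutual_visibility_set (D_adj p) (~: [set w r | r : I]).
Proof.
move=> w_hull w_disj I_gt4; apply: common_neighbour_mutual_visibility => S T _ _ _ _.
(* [S] and [T] use at most four points, so one of the edges [w r] avoids both *)
have /existsP [r avoid] : [exists r, [disjoint val (w r) & val S :|: val T]].
  apply: disjoint_family_avoid w_disj _; apply: leq_ltn_trans (leq_card_setU _ _) _.
  by rewrite (eqP (valP S)) (eqP (valP T)).
have [a [b [ab def_wr]]] := w_hull r.
exists (w r); first by rewrite inE negbK; apply: imset_f.
rewrite [D_adj p (w r) T]D_adj_sym.
by apply/andP; split; apply: hull_edge_D_adj ab def_wr _;
  rewrite disjoint_sym; apply: disjointWr avoid; [exact: subsetUl | exact: subsetUr].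
Qed.

End Segments.

Unset Implicit Arguments. Set Strict Implicit.
Theorem lemma18 (R : realType) (n : nat) (p : 'I_n -> (R * R)%type) :
  injective p ->
  general_position p ->
  (10 <= num_hull_boundary p)%N ->
  ('C(n, 2) - 5 <= mu (D_adj p))%N.
Proof.
move=> p_inj p_gp hull_ge10.
have n_gt1 : (1 < n)%N.
  have : (num_hull_boundary p <= n)%N by rewrite -[n in (_ <= n)%N]card_ord max_card.
  lia.
have [k [c cyc]] := hull_cycle_exists p_inj p_gp n_gt1.
have k_ge10 := leq_trans hull_ge10 (num_hull_boundary_le p_gp cyc).
have [w [w_hull w_disj]] := hull_cycle_disjoint_edges cyc k_ge10.
have U_mv : mutual_visibility_set (D_adj p) (~: [set w r | r : 'I_5]).
  by apply: hull_edges_complement_mutual_visibility w_hull w_disj _; rewrite card_ord.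
apply: leq_trans (card_le_mu U_mv).
rewrite cardsCs setCK card_seg_vertex leq_sub2l //.
by apply: leq_trans (leq_imset_card _ _) _; rewrite card_ord.
Qed.
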